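(* Let $C$ be a smooth non-hyperelliptic genus $4$ curve, let $S$ be the associated K3 surface with order-$3$ deck transformation $\sigma$, and let $M,N\subset H^2(S,\mathbb{Z})$ and $\eta$ be as below. Then for every automorphism $\zeta$ of the lattice $N$, exactly one of $\zeta,-\zeta$ is the restriction of an automorphism of $H^2(S,\mathbb{Z})$ that fixes $\eta$.
   Context: $C$ is canonically embedded in $\mathbb{P}^3$ as $Q\cap K$, where $Q$ is a quadric (smooth or with one node) and $K$ a cubic surface. $S$ is the K3 surface that is the triple cyclic cover of $Q$ (of its minimal resolution if $Q$ is singular) branched along $C$, and $\sigma$ is a generator of the deck group. $M=H^2(S,\mathbb{Z})^{\sigma^*}$ is isometric to $U(3)$, where $U$ is the hyperbolic plane with basis $x_1,x_2$, $x_i^2=0$, $x_1x_2=1$, and $U(3)$ means the form scaled by $3$. $\eta\in M$ is the class corresponding to $x_1+x_2$, the pullback of the hyperplane class of $Q$. $N=M^\perp$ has rank $20$. Lattice automorphisms are isometries. *)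

(* The K3 lattice H^2(S,Z) is modelled concretely as
   row vectors 'rV[int]_22 with the Gram matrix of U^3 + E8(-1)^2. *)
From HB Require Import structures.
From mathcomp Require Import all_boot all_order all_algebra.
Set Implicit Arguments. Unset Strict Implicit. Unset Printing Implicit Defensive.
Import Order.TTheory GRing.Theory Num.Theory.
Local Open Scope ring_scope.

Definition e8adj (a b : nat) : bool :=
  ((a.+1 == b) && (b <= 6)%N) || ((b.+1 == a) && (a <= 6)%N)
  || ((a == 4%N) && (b == 7%N)) || ((a == 7%N) && (b == 4%N)).

Definition e8m (a b : nat) : int :=
  if a == b then -2 else if e8adj a b then 1 else 0.

(* Gram entries of the K3 lattice U + U + U + E8(-1) + E8(-1):
   indices 0..5 are three hyperbolic planes {0,1},{2,3},{4,5};
   indices 6..13 and 14..21 are two copies of E8(-1). *)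
Definition k3entry (i j : nat) : int :=
  if (i < 6)%N then
    (if [&& (j < 6)%N, i./2 == j./2 & i != j] then 1 else 0)
  else if (j < 6)%N then 0
  else if ((i - 6) %/ 8 == (j - 6) %/ 8)%N then e8m ((i - 6) %% 8) ((j - 6) %% 8)
  else 0.

Definition k3gram : 'M[int]_22 := \matrix_(i < 22, j < 22) k3entry i j.

Definition k3form (x y : 'rV[int]_22) : int := (x *m k3gram *m y^T) 0 0.

Definition inSpan2 (e1 e2 v : 'rV[int]_22) : Prop :=
  exists a b : int, v = a *: e1 + b *: e2.

Definition inPerp2 (e1 e2 v : 'rV[int]_22) : Prop :=
  k3form v e1 = 0 /\ k3form v e2 = 0.

(* zeta is an automorphism (bijective additive isometry) of the lattice N;
   values of zeta outside N are irrelevant. *)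
Definition is_lattice_aut (N : 'rV[int]_22 -> Prop)
    (zeta : 'rV[int]_22 -> 'rV[int]_22) : Prop :=
  [/\ (forall v, N v -> N (zeta v)),
      (forall u v, N u -> N v -> zeta (u + v) = zeta u + zeta v),
      (forall u v, N u -> N v -> k3form (zeta u) (zeta v) = k3form u v),
      (forall u v, N u -> N v -> zeta u = zeta v -> u = v)
    & (forall w, N w -> exists2 v, N v & zeta v = w)].

Definition is_k3_aut (A : 'M[int]_22) : Prop :=
  A \in unitmx /\ forall x y, k3form (x *m A) (y *m A) = k3form x y.

Definition extends_fixing (N : 'rV[int]_22 -> Prop) (eta : 'rV[int]_22)
    (zeta : 'rV[int]_22 -> 'rV[int]_22) : Prop :=
  exists A : 'M[int]_22,
    [/\ is_k3_aut A, eta *m A = eta & forall v, N v -> v *m A = zeta v].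

(* M = Z e1 + Z e2 is U(3), so the discriminant groups of M and of N = M^perp
   are both (Z/3)^2, and since the K3 lattice is unimodular, an isometry of N
   together with an isometry of M extends to the whole lattice exactly when
   their actions on these discriminant groups correspond.  The isometries of M
   fixing [e1 + e2] are the identity and the swap of e1 and e2.  On the other
   side, every isometry of N acts on its discriminant form, the hyperbolic
   plane over F_3, by one of +-1 or +-swap; the sign decides which of zeta and
   -zeta glues to an isometry of M, and exactly one of them does.  All of this
   is done with integral vectors: [3 v] splits into pieces of M and N, and
   discriminant classes are read off from products with e1, e2 modulo 3. *)

From HB Require Import structures.
From mathcomp Require Import all_boot all_order all_algebra.
From mathcomp Require Import ring zify.
From Stdlib Require Import Classical.

Set Implicit Arguments.
Unset Strict Implicit.
Unset Printing Implicit Defensive.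
Import GRing.Theory.
Local Open Scope ring_scope.

Local Notation "''[' u , v ]" := (k3form u v) (format "''[' u ,  v ]").

(* Inverse of the Cartan matrix of E8, in the node numbering of [e8adj]. *)
Definition e8inv : seq (seq int) :=
 [:: [:: 2; 3; 4; 5; 6; 4; 2; 3]; [:: 3; 6; 8; 10; 12; 8; 4; 6];
     [:: 4; 8; 12; 15; 18; 12; 6; 9]; [:: 5; 10; 15; 20; 24; 16; 8; 12];
     [:: 6; 12; 18; 24; 30; 20; 10; 15]; [:: 4; 8; 12; 16; 20; 14; 7; 10];
     [:: 2; 4; 6; 8; 10; 7; 4; 5]; [:: 3; 6; 9; 12; 15; 10; 5; 8]].

Definition k3inv_entry (i j : nat) : int :=
  if (i < 6)%N then k3entry i j
  else if (j < 6)%N then 0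
  else if ((i - 6) %/ 8 == (j - 6) %/ 8)%N then
    - nth 0 (nth [::] e8inv ((i - 6) %% 8)) ((j - 6) %% 8)
  else 0.

Definition k3inv : 'M[int]_22 := \matrix_(i < 22, j < 22) k3inv_entry i j.

Lemma mem_iota22 (k : 'I_22) : (k : nat) \in iota 0 22.
Proof. by rewrite mem_iota ltn_ord. Qed.

Lemma k3gram_inv : k3gram *m k3inv = 1%:M.
Proof.
have h : all (fun i => all (fun j =>
    \sum_(0 <= k < 22) k3entry i k * k3inv_entry k j == (i == j)%:R)
    (iota 0 22)) (iota 0 22).
  by rewrite unlock; vm_compute.
apply/matrixP=> i j; rewrite !mxE; under eq_bigr do rewrite !mxE.
rewrite -(big_mkord xpredT (fun k => k3entry i k * k3inv_entry k j)).
by rewrite (eqP (allP (allP h _ (mem_iota22 i)) _ (mem_iota22 j))).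
Qed.

Lemma k3gram_tr : k3gram^T = k3gram.
Proof.
have h : all (fun i => all (fun j => k3entry i j == k3entry j i)
    (iota 0 22)) (iota 0 22).
  by vm_compute.
apply/matrixP=> i j; rewrite !mxE.
exact: (eqP (allP (allP h _ (mem_iota22 j)) _ (mem_iota22 i))).
Qed.

Lemma k3formDl x y z : '[x + y, z] = '[x, z] + '[y, z].
Proof. by rewrite /k3form !mulmxDl mxE. Qed.

Lemma k3formZl (c : int) x z : '[c *: x, z] = c * '[x, z].
Proof. by rewrite /k3form -!scalemxAl mxE. Qed.

Lemma k3formNl x z : '[- x, z] = - '[x, z].
Proof. by rewrite -scaleN1r k3formZl mulN1r. Qed.

Lemma k3formBl x y z : '[x - y, z] = '[x, z] - '[y, z].
Proof. by rewrite k3formDl k3formNl. Qed.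

Lemma k3formC x y : '[x, y] = '[y, x].
Proof.
have tr_xy : (x *m k3gram *m y^T)^T = y *m k3gram *m x^T.
  by rewrite !trmx_mul trmxK k3gram_tr mulmxA.
by rewrite /k3form -tr_xy [RHS]mxE.
Qed.

Lemma k3formDr x y z : '[z, x + y] = '[z, x] + '[z, y].
Proof. by rewrite !(k3formC z) k3formDl. Qed.

Lemma k3formZr (c : int) x z : '[z, c *: x] = c * '[z, x].
Proof. by rewrite !(k3formC z) k3formZl. Qed.

Lemma k3formNr x z : '[z, - x] = - '[z, x].
Proof. by rewrite !(k3formC z) k3formNl. Qed.

Lemma k3form0l z : '[0, z] = 0.
Proof. by rewrite -(scale0r 0) k3formZl mul0r. Qed.

Lemma k3form_orth_sum a b c d :
  '[a, d] = 0 -> '[b, c] = 0 -> '[a + b, c + d] = '[a, c] + '[b, d].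
Proof. by move=> ad bc; rewrite k3formDl !k3formDr ad bc addr0 add0r. Qed.

Lemma k3form_delta x j : '[x, delta_mx 0 j] = (x *m k3gram) 0 j.
Proof. by rewrite /k3form trmx_delta -colE mxE. Qed.

(* Unimodularity; for [d = 0] this is nondegeneracy. *)
Lemma k3form_dvd (d : int) x :
  (forall y, (d %| '[x, y])%Z) -> exists w, x = d *: w.
Proof.
move=> dvd_x; pose w := \row_j divz ((x *m k3gram) 0 j) d.
have xG : x *m k3gram = d *: w.
  apply/rowP => j; rewrite [RHS]mxE [w 0 j]mxE mulrC divzK // -k3form_delta.
  exact: dvd_x.
by exists (w *m k3inv); rewrite -[x]mulmx1 -k3gram_inv mulmxA xG scalemxAl.
Qed.

Lemma scalemxI (R : idomainType) m n (c : R) :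
  c != 0 -> injective (fun A : 'M[R]_(m, n) => c *: A).
Proof.
move=> c_neq0 A B /matrixP eqAB; apply/matrixP => i j.
by apply: (mulfI c_neq0); have := eqAB i j; rewrite !mxE.
Qed.

Lemma mul_rV_lin1_additive m n (h : 'rV[int]_m -> 'rV[int]_n) :
  {morph h : x y / x - y} -> forall u, u *m lin1_mx h = h u.
Proof.
move=> hB u.
pose hA : {additive 'rV[int]_m -> 'rV[int]_n} :=
  HB.pack h (GRing.isZmodMorphism.Build _ _ h hB).
have hD : {morph h : x y / x + y} := raddfD hA.
have hZ c : {morph h : x / x *~ c} := raddfMz hA c.
rewrite mulmx_sum_row {2}(row_sum_delta u) (big_morph h hD (raddf0 hA)).
apply: eq_bigr => i _; rewrite -[u 0 i]intz !scaler_int hZ; congr (_ *~ _).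
by apply/rowP => j; rewrite !mxE.
Qed.

Lemma mx_entry_delta (R : pzSemiRingType) m (B : 'M[R]_m) (i j : 'I_m) :
  (delta_mx (0 : 'I_1) i *m B *m (delta_mx (0 : 'I_1) j)^T) 0 0 = B i j.
Proof. by rewrite trmx_delta -colE mxE -rowE mxE. Qed.

(* [A G A^T = G] with [det G = ±1] forces [det A = ±1]. *)
Lemma is_k3_aut_isometry (A : 'M[int]_22) :
  (forall x y, '[x *m A, y *m A] = '[x, y]) -> is_k3_aut A.
Proof.
move=> A_iso; split=> //.
have AGA : A *m k3gram *m A^T = k3gram.
  apply/matrixP => i j; rewrite -mx_entry_delta -[in RHS]mx_entry_delta.
  by rewrite -[RHS]/'[delta_mx 0 i, delta_mx 0 j] -A_iso /k3form trmx_mul !mulmxA.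
have detG_unit : \det k3gram \is a GRing.unit.
  by rewrite -unitmxE; case: (mulmx1_unit k3gram_inv).
rewrite unitmxE; apply/unitrPr; exists (\det A).
apply: (mulIr detG_unit).
by rewrite mul1r -[in RHS]AGA !det_mulmx det_tr mulrAC.
Qed.

Local Notation res3 z := (z%:~R : 'F_3).

Fact three_neq0 : 3 != 0 :> int. Proof. by []. Qed.

Lemma res3_eq0 (z : int) : (res3 z == 0) = (3 %| z)%Z.
Proof. by rewrite (dvdz_pcharf (pchar_Fp (isT : prime 3))). Qed.

Lemma res3_3M (z : int) : res3 (3 * z) = 0.
Proof. by apply/eqP; rewrite res3_eq0 dvdz_mulr. Qed.

Lemma res3_eq0_divK (z : int) : res3 z = 0 -> z = 3 * (z %/ 3)%Z.
Proof. by move/eqP; rewrite res3_eq0 mulrC => /divzK. Qed.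

Definition F3_elems : seq 'F_3 := [:: 0; 1; -1].

Lemma F3_enum (x : 'F_3) : x \in F3_elems.
Proof.
by case: x => -[|[|[|//]]] lt_x3; rewrite !inE; apply/or3P;
  [apply: Or31 | apply: Or32 | apply: Or33]; apply/eqP/val_inj.
Qed.

Lemma F3_mul_self (x : 'F_3) : x != 0 -> x * x = 1.
Proof.
by have := F3_enum x; rewrite !inE => /or3P[] /eqP->; rewrite ?eqxx // ?mulrNN mulr1.
Qed.

(* The orthogonal group of the hyperbolic plane over F_3 is {±1, ±swap}. *)
Lemma F3_hyperbolic_isometry (p q r t : 'F_3) :
  q * p + p * q = 0 -> t * r + r * t = 0 -> t * p + r * q = 1 ->
  exists2 s : 'F_3, s = 1 \/ s = -1 &
    [/\ p = s, q = 0, r = 0 & t = s] \/ [/\ p = 0, q = s, r = s & t = 0].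
Proof.
have: all (fun p => all (fun q => all (fun r => all (fun t =>
    [&& q * p + p * q == 0, t * r + r * t == 0 & t * p + r * q == 1] ==>
    has (fun s : 'F_3 => [&& p == s, q == 0, r == 0 & t == s]
                      || [&& p == 0, q == s, r == s & t == 0]) [:: 1; -1])
    F3_elems) F3_elems) F3_elems) F3_elems.
  by vm_compute.
move=> /allP/(_ p (F3_enum p))/allP/(_ q (F3_enum q))/allP/(_ r (F3_enum r)).
move=> /allP/(_ t (F3_enum t)) + hqp htr htp.
rewrite hqp htr htp !eqxx implyTb => /hasP[s s_pm /orP hs].
exists s; first by move: s_pm; rewrite !inE => /orP[] /eqP; [left|right].
by case: hs => /and4P[/eqP-> /eqP-> /eqP-> /eqP->]; [left|right].
Qed.

Section HyperbolicSublattice.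

Variables e1 e2 : 'rV[int]_22.
Hypotheses (e1e1 : '[e1, e1] = 0) (e2e2 : '[e2, e2] = 0) (e1e2 : '[e1, e2] = 3).
Hypothesis span_primitive : forall (k : int) v,
  k != 0 -> inSpan2 e1 e2 (k *: v) -> inSpan2 e1 e2 v.

Local Notation N := (inPerp2 e1 e2).

Lemma inPerp2_0 : N 0.
Proof. by split; rewrite k3form0l. Qed.

Lemma inPerp2D u v : N u -> N v -> N (u + v).
Proof. by move=> [u1 u2] [v1 v2]; split; rewrite k3formDl ?u1 ?u2 ?v1 ?v2 addr0. Qed.

Lemma inPerp2Z (c : int) u : N u -> N (c *: u).
Proof. by move=> [u1 u2]; split; rewrite k3formZl ?u1 ?u2 mulr0. Qed.

Lemma inPerp2N u : N u -> N (- u).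
Proof. by rewrite -scaleN1r; apply: inPerp2Z. Qed.

Lemma inPerp2B u v : N u -> N v -> N (u - v).
Proof. by move=> Nu /inPerp2N; apply: inPerp2D. Qed.

Lemma inPerp2_scale3 u : N (3 *: u) -> N u.
Proof.
case; rewrite !k3formZl => /eqP u1 /eqP u2.
by split; apply/eqP; move: u1 u2; rewrite !mulf_eq0.
Qed.

Lemma k3form_span_e1 (a b : int) : '[a *: e1 + b *: e2, e1] = 3 * b.
Proof. by rewrite k3formDl !k3formZl e1e1 (k3formC e2) e1e2 mulr0 add0r mulrC. Qed.

Lemma k3form_span_e2 (a b : int) : '[a *: e1 + b *: e2, e2] = 3 * a.
Proof. by rewrite k3formDl !k3formZl e2e2 e1e2 mulr0 addr0 mulrC. Qed.

Lemma k3form_span (a b c d : int) :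
  '[a *: e1 + b *: e2, c *: e1 + d *: e2] = 3 * (a * d + b * c).
Proof. by rewrite k3formDr !k3formZr k3form_span_e1 k3form_span_e2; ring. Qed.

Lemma k3form_span_perp (a b : int) n : N n -> '[a *: e1 + b *: e2, n] = 0.
Proof.
by case=> n1 n2; rewrite k3formDl !k3formZl !(k3formC _ n) n1 n2 !mulr0 addr0.
Qed.

Lemma span_dvd3 (c d : int) w :
  3 *: w = c *: e1 + d *: e2 -> (3 %| c)%Z /\ (3 %| d)%Z.
Proof.
move=> wE; have [a [b wE']] : inSpan2 e1 e2 w.
  by apply: (@span_primitive 3) => //; exists c, d.
have := congr1 (k3form^~ e2) wE; have := congr1 (k3form^~ e1) wE.
rewrite /= !k3formZl wE' !k3form_span_e1 !k3form_span_e2 => eq1 eq2.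
rewrite -(mulfI three_neq0 eq1) -(mulfI three_neq0 eq2).
by split; apply/dvdz_mulr/dvdzz.
Qed.

(* [mproj v] and [nproj v] are 3 times the orthogonal projections of [v] to M
   and N; the factor 3, the discriminant of U(3), keeps them integral. *)
Definition mproj v := '[v, e2] *: e1 + '[v, e1] *: e2.

Definition nproj v := 3 *: v - mproj v.

(* [mproj v] followed by one of the two isometries of M fixing [e1 + e2]:
   the identity, or the swap of [e1] and [e2] when [sw] holds. *)
Definition mtwist (sw : bool) v :=
  if sw then '[v, e1] *: e1 + '[v, e2] *: e2 else mproj v.

Lemma mproj_add_nproj v : mproj v + nproj v = 3 *: v.
Proof. by rewrite /nproj addrC subrK. Qed.

Lemma mtwistB sw : {morph mtwist sw : x y / x - y}.
Proof.
move=> x y; apply/rowP => j.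
by case: sw; rewrite /mtwist /mproj !k3formBl !mxE; ring.
Qed.

Lemma nprojB : {morph nproj : x y / x - y}.
Proof.
move=> x y; apply/rowP => j.
by rewrite /nproj /mproj !k3formBl !mxE; ring.
Qed.

Lemma mproj_perp v n : N n -> '[mproj v, n] = 0.
Proof. exact: k3form_span_perp. Qed.

Lemma mtwist_perp sw v n : N n -> '[mtwist sw v, n] = 0.
Proof. by case: sw; apply: k3form_span_perp. Qed.

Lemma nproj_perp v : N (nproj v).
Proof.
by split; rewrite /nproj /mproj k3formBl k3formZl ?k3form_span_e1 ?k3form_span_e2 subrr.
Qed.

Lemma k3form_nproj v n : N n -> '[nproj v, n] = 3 * '[v, n].
Proof. by move=> Nn; rewrite /nproj k3formBl k3formZl mproj_perp // subr0. Qed.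

Lemma k3form_mtwist sw x y : '[mtwist sw x, mtwist sw y] = '[mproj x, mproj y].
Proof. by case: sw => //; rewrite /mproj !k3form_span; ring. Qed.

Lemma k3form_scale3 x y :
  '[3 *: x, 3 *: y] = '[mproj x, mproj y] + '[nproj x, nproj y].
Proof.
rewrite -!mproj_add_nproj k3form_orth_sum //; first exact/mproj_perp/nproj_perp.
by rewrite k3formC; apply/mproj_perp/nproj_perp.
Qed.

Lemma k3form_eta_e1 : '[e1 + e2, e1] = 3.
Proof. by rewrite k3formDl e1e1 k3formC e1e2 add0r. Qed.

Lemma k3form_eta_e2 : '[e1 + e2, e2] = 3.
Proof. by rewrite k3formDl e2e2 e1e2 addr0. Qed.

Lemma mtwist_eta sw : mtwist sw (e1 + e2) = 3 *: (e1 + e2).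
Proof. by case: sw; rewrite /mtwist /mproj k3form_eta_e1 k3form_eta_e2 scalerDr. Qed.

Lemma nproj_eta : nproj (e1 + e2) = 0.
Proof. by rewrite /nproj -(mtwist_eta false) subrr. Qed.

Lemma mtwist_perp0 sw n : N n -> mtwist sw n = 0.
Proof. by case=> n1 n2; case: sw; rewrite /mtwist /mproj n1 n2 !scale0r addr0. Qed.

Lemma nproj_perp_id n : N n -> nproj n = 3 *: n.
Proof. by move=> Nn; rewrite /nproj -/(mtwist false n) mtwist_perp0 // subr0. Qed.

Lemma perp_span x : (forall n, N n -> '[x, n] = 0) -> inSpan2 e1 e2 x.
Proof.
move=> x_perp.
have [w nxE] : exists w, nproj x = 0 *: w.
  apply: k3form_dvd => y; rewrite dvd0z; apply/eqP/(mulfI three_neq0).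
  rewrite mulr0 -k3formZr -mproj_add_nproj k3formDr k3formC.
  rewrite (mproj_perp _ (nproj_perp x)) (k3form_nproj _ (nproj_perp y)).
  by rewrite x_perp ?mulr0 ?add0r //; apply: nproj_perp.
apply: (@span_primitive 3) => //; exists '[x, e2], '[x, e1].
by rewrite -mproj_add_nproj nxE scale0r addr0.
Qed.

Lemma res3_mtwist sw v y :
  res3 '[mtwist sw v, y] =
    if sw then res3 '[v, e1] * res3 '[y, e1] + res3 '[v, e2] * res3 '[y, e2]
    else res3 '[v, e2] * res3 '[y, e1] + res3 '[v, e1] * res3 '[y, e2].
Proof.
by case: sw; rewrite /mtwist /mproj k3formDl !k3formZl intrD !intrM
  (k3formC e1 y) (k3formC e2 y).
Qed.

Lemma span_residue_witness (a b : int) :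
  res3 a != 0 \/ res3 b != 0 -> exists v, res3 '[v, a *: e1 + b *: e2] != 0.
Proof.
move=> ab_nz; apply: NNPP => no_witness.
have [w wE] : exists w, a *: e1 + b *: e2 = 3 *: w.
  apply: k3form_dvd => y; rewrite -res3_eq0 k3formC; apply/negPn/negP => y_nz.
  by apply: no_witness; exists y.
have [a3 b3] := span_dvd3 (esym wE).
by case: ab_nz; rewrite res3_eq0 ?a3 ?b3.
Qed.

Lemma residue_dual_basis : exists v1 v2,
  [/\ res3 '[v1, e1] = 1, res3 '[v1, e2] = 0, res3 '[v2, e1] = 0
    & res3 '[v2, e2] = 1].
Proof.
have [a a_nz] : exists a, res3 '[a, e1] != 0.
  have [a] := @span_residue_witness 1 0 (or_introl isT).
  by rewrite scale1r scale0r addr0; exists a.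
have [b] := @span_residue_witness (- '[a, e2]) '[a, e1] (or_intror a_nz).
rewrite k3formDr !k3formZr addrC mulNr.
move=> D_nz; have := F3_mul_self D_nz; rewrite intrB !intrM => DD.
pose D := '[a, e1] * '[b, e2] - '[a, e2] * '[b, e1].
exists (D *: ('[b, e2] *: a - '[a, e2] *: b)), (D *: ('[a, e1] *: b - '[b, e1] *: a)).
by split; rewrite k3formZl k3formBl !k3formZl /D !(intrM, intrB);
  try rewrite -[RHS]DD; ring.
Qed.

Lemma lattice_aut_opp g : is_lattice_aut N g -> is_lattice_aut N (fun v => - g v).
Proof.
case=> gN gD g_iso g_inj g_surj; split.
- by move=> v /gN /inPerp2N.
- by move=> u v Nu Nv; rewrite gD // opprD.
- by move=> u v Nu Nv; rewrite k3formNl k3formNr opprK g_iso.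
- by move=> u v Nu Nv /oppr_inj; apply: g_inj.
- move=> w /inPerp2N /g_surj[v Nv gvE].
  by exists v => //; rewrite gvE opprK.
Qed.

Lemma lattice_aut0 g : is_lattice_aut N g -> g 0 = 0.
Proof.
case=> _ gD _ _ _; have := gD 0 0 inPerp2_0 inPerp2_0.
by rewrite addr0 -{1}[g 0]addr0 => /(addrI (g 0))/esym.
Qed.

Lemma lattice_autB g u v :
  is_lattice_aut N g -> N u -> N v -> g (u - v) = g u - g v.
Proof.
move=> [_ gD _ _ _] Nu Nv.
by rewrite -{2}(subrK v u) (gD (u - v) v) ?addrK //; apply: inPerp2B.
Qed.

Lemma lattice_aut_scale3 g u : is_lattice_aut N g -> N u -> g (3 *: u) = 3 *: g u.
Proof.
move=> [_ gD _ _ _] Nu; have -> : (3 : int) = 1 + 1 + 1 by [].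
by rewrite !scalerDl !scale1r !gD //; apply: inPerp2D.
Qed.

(* The divisibility hypothesis says that [g] and the isometry of M selected
   by [sw] act compatibly on the discriminant groups. *)
Lemma extends_fixing_glue g sw :
  is_lattice_aut N g ->
  (forall v, exists w, mtwist sw v + g (nproj v) = 3 *: w) ->
  extends_fixing N (e1 + e2) g.
Proof.
move=> g_aut glue3; have [gN _ g_iso _ _] := g_aut.
pose h v := mtwist sw v + g (nproj v).
pose gv v : 'rV[int]_22 := \row_j divz (h v 0 j) 3.
have gvE v : 3 *: gv v = h v.
  have [w hw] := glue3 v; apply/rowP => j.
  by rewrite [LHS]mxE [gv v 0 j]mxE /h hw [(3 *: w) 0 j]mxE mulKz.
have gvB : {morph gv : x y / x - y}.
  move=> x y; apply: (scalemxI three_neq0).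
  rewrite /= scalerBr !gvE /h mtwistB nprojB.
  by rewrite (lattice_autB g_aut (nproj_perp x) (nproj_perp y)) opprD addrACA.
have gv_iso u w : '[gv u, gv w] = '[u, w].
  apply: (mulfI three_neq0); apply: (mulfI three_neq0).
  rewrite -k3formZl -k3formZr -[in RHS]k3formZl -k3formZr !gvE k3form_scale3.
  rewrite k3form_orth_sum ?k3form_mtwist ?(g_iso _ _ (nproj_perp u) (nproj_perp w)) //.
    exact/mtwist_perp/gN/nproj_perp.
  by rewrite k3formC; apply/mtwist_perp/gN/nproj_perp.
have gvA := mul_rV_lin1_additive gvB.
exists (lin1_mx gv); split.
- by apply: is_k3_aut_isometry => x y; rewrite !gvA.
- apply: (scalemxI three_neq0).
  by rewrite /= gvA gvE /h mtwist_eta nproj_eta (lattice_aut0 g_aut) addr0.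
- move=> v Nv; apply: (scalemxI three_neq0).
  by rewrite /= gvA gvE /h mtwist_perp0 // nproj_perp_id // add0r lattice_aut_scale3.
Qed.

Lemma extension_twist g A :
  (forall w, N w -> exists2 v, N v & g v = w) -> is_k3_aut A ->
  (e1 + e2) *m A = e1 + e2 -> (forall v, N v -> v *m A = g v) ->
  exists sw, forall v, mproj v *m A = mtwist sw v.
Proof.
move=> g_surj [_ A_iso] A_eta A_N.
have [x [y e1A]] : inSpan2 e1 e2 (e1 *m A).
  apply: perp_span => n Nn; have [v Nv <-] := g_surj n Nn.
  by rewrite -A_N // A_iso k3formC; case: Nv.
have e2A : e2 *m A = e1 + e2 - e1 *m A by rewrite -A_eta mulmxDl addrAC subrr add0r.
have isotropic : '[e1 *m A, e1 *m A] = 0 by rewrite A_iso e1e1.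
have eta_dot : '[e1 *m A, (e1 + e2) *m A] = 3 by rewrite A_iso k3formDr e1e1 e1e2 add0r.
rewrite A_eta e1A k3formDr k3form_span_e1 k3form_span_e2 in eta_dot.
rewrite e1A k3form_span in isotropic.
have [[x1 y0] | [x0 y1]] : (x = 1 /\ y = 0) \/ (x = 0 /\ y = 1).
  have : (x == 0) || (y == 0) by rewrite -mulf_eq0; apply/eqP; lia.
  by case/orP => /eqP xy0; move: eta_dot; rewrite xy0; lia.
- have e1A' : e1 *m A = e1 by rewrite e1A x1 y0 scale1r scale0r addr0.
  have e2A' : e2 *m A = e2 by rewrite e2A e1A' addrC addKr.
  by exists false => v; rewrite /mtwist /mproj mulmxDl -!scalemxAl e1A' e2A'.
- have e1A' : e1 *m A = e2 by rewrite e1A x0 y1 scale1r scale0r add0r.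
  have e2A' : e2 *m A = e1 by rewrite e2A e1A' addrK.
  by exists true => v; rewrite /mtwist /mproj mulmxDl -!scalemxAl e1A' e2A' addrC.
Qed.

Lemma res3_nproj v x :
  res3 '[nproj v, x]
  = - (res3 '[v, e2] * res3 '[x, e1] + res3 '[v, e1] * res3 '[x, e2]).
Proof.
by rewrite /nproj k3formBl k3formZl intrB res3_3M sub0r -/(mtwist false v) res3_mtwist.
Qed.

Section DiscriminantForm.

Variables v1 v2 : 'rV[int]_22.
Hypotheses (v1e1 : res3 '[v1, e1] = 1) (v1e2 : res3 '[v1, e2] = 0).
Hypotheses (v2e1 : res3 '[v2, e1] = 0) (v2e2 : res3 '[v2, e2] = 1).

Lemma residue_decomp y : exists (a b : int) n,
  N n /\ y = '[y, e1] *: v1 + '[y, e2] *: v2 + (a *: e1 + b *: e2) + n.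
Proof.
pose r := y - '[y, e1] *: v1 - '[y, e2] *: v2.
have r_e1 : res3 '[r, e1] = 0.
  by rewrite /r !k3formBl !k3formZl !intrB !intrM v1e1 v2e1; ring.
have r_e2 : res3 '[r, e2] = 0.
  by rewrite /r !k3formBl !k3formZl !intrB !intrM v1e2 v2e2; ring.
set c1 := ('[r, e1] %/ 3)%Z; set c2 := ('[r, e2] %/ 3)%Z.
exists c2, c1, (r - (c2 *: e1 + c1 *: e2)); split.
  split; rewrite k3formBl ?k3form_span_e1 ?k3form_span_e2 -?res3_eq0_divK ?subrr //.
by apply/rowP => j; rewrite /r !mxE; ring.
Qed.

Lemma dual3_expand u : N u -> (forall n, N n -> res3 '[u, n] = 0) ->
  forall y,
  res3 '[y, u] = res3 '[y, e1] * res3 '[v1, u] + res3 '[y, e2] * res3 '[v2, u].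
Proof.
move=> Nu u_dual3 y; have [a [b [n [Nn yE]]]] := residue_decomp y.
rewrite {1}yE k3formDl [in X in X + _]k3formDl k3form_span_perp // addr0.
by rewrite k3formDl !k3formZl (k3formC n) !intrD !intrM u_dual3 // addr0.
Qed.

Section LatticeAutomorphism.

Variable zeta : 'rV[int]_22 -> 'rV[int]_22.
Hypothesis zeta_aut : is_lattice_aut N zeta.

(* [zeta (nproj v) / 3] lies in the dual lattice N^*, so [disc v y] only
   depends on [v] and [y] modulo M + N: it is the action of [zeta] on the
   discriminant group N^*/N = (Z/3)^2, written as a bilinear form over F_3. *)
Definition disc v y := res3 '[zeta (nproj v), y].

Lemma disc_perp v n : N n -> disc v n = 0.
Proof.
case: zeta_aut => _ _ z_iso _ z_surj Nn; have [m Nm <-] := z_surj n Nn.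
by rewrite /disc (z_iso _ _ (nproj_perp v) Nm) k3form_nproj // res3_3M.
Qed.

Lemma disc_expandr v y :
  disc v y = res3 '[y, e1] * disc v v1 + res3 '[y, e2] * disc v v2.
Proof.
have [zN _ _ _ _] := zeta_aut.
rewrite /disc !(k3formC (zeta _)); apply: dual3_expand; first exact/zN/nproj_perp.
exact: disc_perp.
Qed.

Lemma disc_transpose v y u :
  N u -> zeta u = nproj y -> '[zeta (nproj v), y] = '[v, u].
Proof.
have [zN _ z_iso _ _] := zeta_aut; move=> Nu zuE; apply: (mulfI three_neq0).
rewrite -k3formZr -mproj_add_nproj k3formDr k3formC.
rewrite (mproj_perp _ (zN _ (nproj_perp v))) add0r -zuE (z_iso _ _ (nproj_perp v) Nu).
exact: k3form_nproj.
Qed.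

Lemma disc_expandl v y :
  disc v y = res3 '[v, e1] * disc v1 y + res3 '[v, e2] * disc v2 y.
Proof.
have [zN _ z_iso _ z_surj] := zeta_aut.
have [u Nu zuE] := z_surj _ (nproj_perp y).
rewrite /disc !(disc_transpose _ Nu zuE) (dual3_expand Nu) // => n Nn.
by rewrite -(z_iso _ _ Nu Nn) zuE k3form_nproj ?res3_3M //; apply: zN.
Qed.

(* [zeta] preserves the discriminant form: the matrix of [disc] in the
   basis [v1, v2] is orthogonal for the hyperbolic form of F_3^2. *)
Lemma disc_isometry y z :
  disc z v2 * disc y v1 + disc z v1 * disc y v2
  = res3 '[y, e2] * res3 '[z, e1] + res3 '[y, e1] * res3 '[z, e2].
Proof.
have [zN _ z_iso _ _] := zeta_aut.
pose w := - '[zeta (nproj z), v2] *: v1 - '[zeta (nproj z), v1] *: v2.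
have w_e1 : res3 '[w, e1] = - disc z v2.
  by rewrite /w k3formBl !k3formZl intrB !intrM intrN v1e1 v2e1; ring.
have w_e2 : res3 '[w, e2] = - disc z v1.
  by rewrite /w k3formBl !k3formZl intrB !intrM intrN v1e2 v2e2; ring.
(* [w] is chosen so that [zeta (nproj z)] and [nproj w] agree in N^*/N. *)
clearbody w.
have [u uE] : exists u, zeta (nproj z) - nproj w = 3 *: u.
  apply: k3form_dvd => x; rewrite -res3_eq0 k3formBl intrB -/(disc z x).
  by rewrite disc_expandr res3_nproj w_e1 w_e2; apply/eqP; ring.
have Nu : N u.
  by apply: inPerp2_scale3; rewrite -uE; apply/inPerp2B/nproj_perp/zN/nproj_perp.
have zzE : zeta (nproj z) = nproj w + 3 *: u by rewrite -uE addrC subrK.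
have key : '[zeta (nproj y), w] + '[zeta (nproj y), u] = '[y, nproj z].
  apply: (mulfI three_neq0).
  rewrite -(k3form_nproj _ (nproj_perp z)) -(z_iso _ _ (nproj_perp y) (nproj_perp z)).
  rewrite zzE k3formDr k3formZr [in RHS]k3formC.
  by rewrite (k3form_nproj _ (zN _ (nproj_perp y))) (k3formC w) mulrDr.
have := congr1 (fun t => res3 t) key.
rewrite /= intrD -/(disc y w) -/(disc y u) (disc_perp y Nu) addr0 disc_expandr w_e1 w_e2.
rewrite k3formC res3_nproj => /eqP; rewrite -subr_eq0 => /eqP res3_key.
apply/eqP; rewrite -subr_eq0 -oppr_eq0 -[X in _ == X]res3_key; apply/eqP; ring.
Qed.

Lemma disc_form : exists2 s : 'F_3, s = 1 \/ s = -1 &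
  exists sw, forall v y, disc v y = s * res3 '[mtwist sw v, y].
Proof.
have := disc_isometry v1 v1; have := disc_isometry v2 v2; have := disc_isometry v1 v2.
rewrite v1e1 v1e2 v2e1 v2e2 !(mul0r, mulr0, mul1r, mulr1, addr0, add0r) => c12 c22 c11.
have [s s_pm [[d11 d12 d21 d22] | [d11 d12 d21 d22]]] :=
  F3_hyperbolic_isometry c11 c22 c12.
- exists s => //; exists true => v y.
  rewrite disc_expandl (disc_expandr v1 y) (disc_expandr v2 y) d11 d12 d21 d22.
  by rewrite res3_mtwist; ring.
- exists s => //; exists false => v y.
  rewrite disc_expandl (disc_expandr v1 y) (disc_expandr v2 y) d11 d12 d21 d22.
  by rewrite res3_mtwist; ring.
Qed.

Lemma extends_fixing_disc : extends_fixing N (e1 + e2) zeta <->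
  exists sw, forall v y, disc v y = - res3 '[mtwist sw v, y].
Proof.
have [_ _ _ _ z_surj] := zeta_aut; split.
- case=> A [A_aut A_eta A_N].
  have [sw A_twist] := extension_twist z_surj A_aut A_eta A_N.
  exists sw => v y; rewrite /disc -(A_N _ (nproj_perp v)).
  have -> : nproj v *m A = 3 *: (v *m A) - mtwist sw v.
    by rewrite /nproj mulmxBl -A_twist scalemxAl.
  by rewrite k3formBl k3formZl intrB res3_3M sub0r.
- case=> sw disc_sw; apply: (@extends_fixing_glue zeta sw zeta_aut) => v.
  apply: k3form_dvd => y; rewrite -res3_eq0 k3formDl intrD -/(disc v y) disc_sw.
  by rewrite addrN.
Qed.

Lemma res3_mtwist_v12 sw : res3 '[mtwist sw v1, v1 + v2] = 1.
Proof. by rewrite res3_mtwist !k3formDl !intrD v1e1 v1e2 v2e1 v2e2; case: sw; ring. Qed.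

Lemma extends_fixing_iff_sign s sw :
  (forall v y, disc v y = s * res3 '[mtwist sw v, y]) ->
  extends_fixing N (e1 + e2) zeta <-> s = -1.
Proof.
move=> disc_s; rewrite extends_fixing_disc; split.
- case=> sw' disc_sw'; have := disc_s v1 (v1 + v2).
  by rewrite disc_sw' !res3_mtwist_v12 mulr1.
- by move=> s_neg; exists sw => v y; rewrite disc_s s_neg mulN1r.
Qed.

End LatticeAutomorphism.

Lemma disc_opp zeta v y : disc (fun x => - zeta x) v y = - disc zeta v y.
Proof. by rewrite /disc k3formNl intrN. Qed.

End DiscriminantForm.

End HyperbolicSublattice.

Theorem lemma7p9 (e1 e2 : 'rV[int]_22)
  (h11 : k3form e1 e1 = 0) (h22 : k3form e2 e2 = 0) (h12 : k3form e1 e2 = 3)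
  (hprim : forall (k : int) (v : 'rV[int]_22),
      k != 0 -> inSpan2 e1 e2 (k *: v) -> inSpan2 e1 e2 v)
  (zeta : 'rV[int]_22 -> 'rV[int]_22)
  (hzeta : is_lattice_aut (inPerp2 e1 e2) zeta) :
  (extends_fixing (inPerp2 e1 e2) (e1 + e2) zeta
   /\ ~ extends_fixing (inPerp2 e1 e2) (e1 + e2) (fun v => - zeta v))
  \/
  (~ extends_fixing (inPerp2 e1 e2) (e1 + e2) zeta
   /\ extends_fixing (inPerp2 e1 e2) (e1 + e2) (fun v => - zeta v)).
Proof.
have [v1 [v2 [v1e1 v1e2 v2e1 v2e2]]] := residue_dual_basis h11 h22 h12 hprim.
have [s s_pm [sw disc_s]] := disc_form h11 h22 h12 v1e1 v1e2 v2e1 v2e2 hzeta.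
have disc_opp_s v y :
    disc e1 e2 (fun x => - zeta x) v y = - s * res3 '[mtwist e1 e2 sw v, y].
  by rewrite disc_opp disc_s mulNr.
have sign := extends_fixing_iff_sign h11 h22 h12 hprim v1e1 v1e2 v2e1 v2e2.
rewrite (sign _ hzeta _ _ disc_s) (sign _ (lattice_aut_opp hzeta) _ _ disc_opp_s).
by case: s_pm => ->; [right | left]; rewrite ?opprK.
Qed.
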